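(* Let $b\ge2$ and $s\ge1$ be integers, and let $M_s(b)$ be the number of tuples $(d_1,\dots,d_s)\in\mathbb N^s$ with $d_1\ge d_2\ge\cdots\ge d_s\ge1$, $d_1\ge2$ and $d_1\cdots d_s=b$. Then $M_s(b)\le b^{\log_2\log_2 b}$. *)

From mathcomp Require Import all_boot.
From Stdlib Require Import Reals.

Set Implicit Arguments.
Unset Strict Implicit.
Unset Printing Implicit Defensive.

(* A candidate tuple (d_1,...,d_s) is encoded as d : {ffun 'I_s -> 'I_b.+1},
   i.e. entries in {0,...,b}; index i : 'I_s stands for d_{i+1}.
   Entries of a tuple with all d_i >= 1 and product b are automatically <= b,
   so this bound loses nothing. *)
Definition is_Mtuple (s b : nat) (d : {ffun 'I_s -> 'I_b.+1}) : bool :=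
  [&& [forall i : 'I_s, forall j : 'I_s, (i <= j)%N ==> (d j <= d i)%N],
      [forall i : 'I_s, (1 <= d i)%N],
      [forall i : 'I_s, (nat_of_ord i == 0)%N ==> (2 <= d i)%N] &
      (\prod_(i < s) (d i : nat) == b)%N].

Definition M (s b : nat) : nat := #|[pred d : {ffun 'I_s -> 'I_b.+1} | is_Mtuple d]|.

Definition log2 (x : R) : R := (ln x / ln 2)%R.

(* Order the entries decreasingly.  Then d_1 is determined by d_2, ..., d_s
   (their product with d_1 is b) and d_i^i <= b, so M_s(b) is at most the
   product over 2 <= i <= s of the number r(i) = floor(b^(1/i)) of admissible
   values for d_i.  Group the indices into dyadic blocks [m, 2m): on each block
   r(i) <= r(m) and r(m)^m <= b, so the block contributes at most b; once
   b < 2^m every r(i) with i >= m equals 1.  Starting from m = 2, at most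
   log2 log2 b blocks are nontrivial. *)
From mathcomp Require Import all_boot zify.
From Stdlib Require Import Reals Lra.
(* Reals rebinds [^] on nat to [Nat.pow] (undone here) and shadows [family]. *)
Import ssrnat.

Set Implicit Arguments.
Unset Strict Implicit.
Unset Printing Implicit Defensive.

Definition iroot (b m : nat) : nat :=
  #|[pred x : 'I_b.+1 | (0 < x) && (x ^ m <= b)]|.

Lemma card_ord_pos_le (n k : nat) (A : {pred 'I_n}) :
  {in A, forall x : 'I_n, 0 < x <= k} -> #|A| <= k.
Proof.
move=> Ak; rewrite cardE -(size_map val) -[k](size_iota 1).
apply: uniq_leq_size; first by rewrite map_inj_uniq ?enum_uniq //; exact: val_inj.
by move=> y /mapP[x]; rewrite mem_enum => /Ak xk ->; rewrite mem_iota add1n ltnS.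
Qed.

Lemma iroot_exp_le (b m : nat) : 0 < m -> iroot b m ^ m <= b.
Proof.
move=> m_gt0; rewrite leqNgt; apply/negP => b_lt.
have : iroot b m <= (iroot b m).-1.
  apply: card_ord_pos_le => x /andP[x_gt0 xb].
  have : x < iroot b m by rewrite -(ltn_exp2r _ _ m_gt0); exact: leq_ltn_trans xb b_lt.
  by move: x_gt0; lia.
by case: (iroot b m) b_lt => [|k]; rewrite ?exp0n ?ltnn.
Qed.

Lemma iroot_le1 (b m : nat) : 0 < m -> b < 2 ^ m -> iroot b m <= 1.
Proof.
move=> m_gt0 b_lt; apply: card_ord_pos_le => x /andP[x_gt0 xb].
have : x < 2 by rewrite -(ltn_exp2r _ _ m_gt0); exact: leq_ltn_trans xb b_lt.
by move: x_gt0; lia.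
Qed.

Lemma iroot_nonincreasing (b m i : nat) : m <= i -> iroot b i <= iroot b m.
Proof.
move=> m_le_i; apply: subset_leq_card; apply/subsetP => x.
rewrite !inE => /andP[x_gt0 xb]; rewrite x_gt0 /=.
exact: leq_trans (leq_pexp2l x_gt0 m_le_i) xb.
Qed.

Lemma iroot_gt0 (b m : nat) : 0 < b -> 0 < iroot b m.
Proof.
move=> b_gt0; apply/card_gt0P; exists (inord 1).
by rewrite inE inordK ?exp1n //; lia.
Qed.

Section Counting.

Variable b : nat.
Hypothesis b_gt0 : 0 < b.

Lemma prod_iroot_le1 (m n : nat) :
  0 < m -> b < 2 ^ m -> \prod_(m <= i < n) iroot b i <= 1.
Proof.
move=> m_gt0 b_lt; rewrite big_nat_cond.
apply: (big_ind (fun x => x <= 1)) => // [x y x_le1 y_le1|i /andP[/andP[m_le_i _] _]].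
  by rewrite -[1]/(1 * 1) leq_mul.
apply: iroot_le1; first exact: leq_trans m_le_i.
exact: leq_trans b_lt (leq_pexp2l _ m_le_i).
Qed.

Lemma prod_iroot_block (m n : nat) :
  0 < m -> n <= 2 * m -> \prod_(m <= i < n) iroot b i <= b.
Proof.
move=> m_gt0 n_le; apply: (leq_trans _ (iroot_exp_le b m_gt0)).
apply: (@leq_trans (iroot b m ^ (n - m))).
  rewrite -prod_nat_const_nat big_nat_cond [X in _ <= X]big_nat_cond.
  by apply: leq_prod => i /andP[/andP[m_le_i _] _]; exact: iroot_nonincreasing.
by apply: leq_pexp2l; [exact: iroot_gt0 | lia].
Qed.

Lemma prod_iroot_dyadic (t m n : nat) :
  0 < m -> b < 2 ^ (m * 2 ^ t) -> \prod_(m <= i < n) iroot b i <= b ^ t.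
Proof.
elim: t m => [|t IH] m m_gt0 b_lt.
  by apply: prod_iroot_le1; rewrite // -[m]muln1.
have [n_le | n_gt] := leqP n (2 * m).
  apply: leq_trans (prod_iroot_block m_gt0 n_le) _.
  by rewrite expnS leq_pmulr // expn_gt0 b_gt0.
rewrite (big_cat_nat _ (n := 2 * m)) /= ?expnS; [|lia|lia].
rewrite leq_mul ?prod_iroot_block //; apply: IH; first lia.
by move: b_lt; rewrite expnS mulnCA mulnA.
Qed.

Lemma Mtuple_exp_le (s : nat) (d : {ffun 'I_s -> 'I_b.+1}) (i : 'I_s) :
  is_Mtuple d -> d i ^ i.+1 <= b.
Proof.
move=> /and4P[/forallP mono /forallP pos _ /eqP prod_b].
rewrite -[X in _ <= X]prod_b (bigID (fun j : 'I_s => j < i.+1)) /=.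
apply: (leq_trans _ (leq_pmulr _ _)); last exact: prodn_gt0.
apply: (@leq_trans (\prod_(j < s | j < i.+1) (d i : nat))).
  by rewrite -(big_ord_widen _ (fun=> d i : nat) (ltn_ord i)) prod_nat_const card_ord.
apply: leq_prod => j j_le_i.
by move/forallP: (mono j) => /(_ i) /implyP; apply; rewrite -ltnS.
Qed.

Lemma Mtuple_tail_inj (s : nat) (d e : {ffun 'I_s.+1 -> 'I_b.+1}) :
  is_Mtuple d -> is_Mtuple e ->
  (forall j : 'I_s, d (lift ord0 j) = e (lift ord0 j)) -> d = e.
Proof.
move=> /and4P[_ _ _ /eqP db] /and4P[_ _ _ /eqP eb] tail_eq.
move: db eb; rewrite !big_ord_recl.
under eq_bigr do rewrite tail_eq.
set P := \prod_(j < s) _ => db eb.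
have P_gt0 : 0 < P by move: b_gt0; rewrite -eb muln_gt0 => /andP[].
apply/ffunP => i; case: (unliftP ord0 i) => [j -> | ->]; first exact: tail_eq.
by apply/val_inj/eqP; rewrite -(eqn_pmul2r P_gt0) db eb.
Qed.

Lemma M_le_prod_iroot (s : nat) : M s.+1 b <= \prod_(2 <= i < s.+2) iroot b i.
Proof.
pose tail (d : {ffun 'I_s.+1 -> 'I_b.+1}) := [ffun j : 'I_s => d (lift ord0 j)].
have tail_inj : {in [pred d | is_Mtuple d] &, injective tail}.
  move=> d e Md Me /ffunP tail_eq; apply: Mtuple_tail_inj => // j.
  by have := tail_eq j; rewrite !ffunE.
pose F (j : 'I_s) := [pred x : 'I_b.+1 | (0 < x) && (x ^ j.+2 <= b)].
apply: (@leq_trans #|finfun.family F|).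
  rewrite /M -(card_in_imset tail_inj); apply: subset_leq_card.
  apply/subsetP => _ /imsetP[d Md ->]; apply/familyP => j; rewrite ffunE inE.
  move: (Md); rewrite inE => /and4P[_ /forallP pos _ _]; rewrite pos /=.
  by have := Mtuple_exp_le (lift ord0 j) Md; rewrite lift0.
rewrite card_family foldrE big_map big_enum /= -[2]/(0 + 2) big_addn big_mkord.
by rewrite subn2 /=; apply: leq_prod => j _; rewrite addn2.
Qed.

End Counting.

Lemma INR_expn (a n : nat) : INR (a ^ n) = (INR a ^ n)%R.
Proof. by elim: n => // n IH; rewrite expnS mult_INR IH. Qed.

Lemma log2_ge (x : R) (k : nat) : (2 ^ k <= x)%R -> (INR k <= log2 x)%R.
Proof.
move=> le_x.
have ln2_gt0 : (0 < ln 2)%R by have := ln_lt_2; lra.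
have pow_gt0 : (0 < 2 ^ k)%R by apply: pow_lt; lra.
have ln_le : (INR k * ln 2 <= ln x)%R.
  rewrite -ln_pow; last lra.
  case: (Rle_lt_or_eq_dec _ _ le_x) => [lt_x | ->]; last exact: Rle_refl.
  exact/Rlt_le/ln_increasing.
rewrite /log2; apply: (Rmult_le_reg_r (ln 2)) => //.
by rewrite /Rdiv Rmult_assoc Rinv_l ?Rmult_1_r //; lra.
Qed.

Theorem lemma5p4 (b s : nat) (hb : (2 <= b)%N) (hs : (1 <= s)%N) :
  (INR (M s b) <= Rpower (INR b) (log2 (log2 (INR b))))%R.
Proof.
have b_gt0 : 0 < b by lia.
set L := trunc_log 2 b; set T := trunc_log 2 L.
have L_gt0 : 0 < L by rewrite trunc_log_gt0.
have b_ge : 2 ^ (2 ^ T) <= b.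
  exact: leq_trans (leq_pexp2l _ (trunc_logP _ L_gt0)) (trunc_logP _ b_gt0).
have b_lt : b < 2 ^ (2 * 2 ^ T).
  apply: leq_trans (trunc_log_ltn b (ltnSn 1)) _; apply: leq_pexp2l => //.
  by rewrite -expnS; exact: trunc_log_ltn.
have count : M s b <= b ^ T.
  case: s hs => // s _; apply: leq_trans (M_le_prod_iroot b_gt0 s) _.
  exact: prod_iroot_dyadic.
have INR2 : INR 2 = 2%R by rewrite /=; lra.
apply: (@Rle_trans _ (INR (b ^ T))); first exact/le_INR/leP.
rewrite INR_expn -Rpower_pow; last by apply: lt_0_INR; apply/ltP.
apply: Rle_Rpower; first by rewrite -[1%R]/(INR 1); apply/le_INR/leP; lia.
apply: log2_ge; rewrite -INR2 -INR_expn; apply: log2_ge.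
by rewrite -INR2 -INR_expn; apply/le_INR/leP.
Qed.
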